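(* Let $0\le t_d\le t_f$ be integers, let $f:\mathbb{F}_q^k\to\{0,1,\dots,k\}$ be the Hamming weight function $f(u)=\mathrm{wt}(u)$, and suppose there exists a systematic $[n,k,2t_d+1]$ linear code over $\mathbb{F}_q$. Then $$r_f(k,t_d,t_f)\le n-k+N(2t_f+1,2(t_f-t_d)).$$
   Context: $d(\cdot,\cdot)$ is Hamming distance and $\mathrm{wt}$ the number of nonzero entries. $N(\lambda,d)$ is the minimum length of a $q$-ary code with $\lambda$ codewords and minimum distance at least $d$ (with $N(\lambda,0)=0$). An $(f,t_d,t_f)$-FCC with redundancy $r$ is a systematic encoding $u\mapsto(u,p_u)\in\mathbb{F}_q^{k+r}$ whose images are at distance $\ge 2t_d+1$ for distinct messages and $\ge 2t_f+1$ for messages with different $f$-values; $r_f(k,t_d,t_f)$ is the minimum such $r$. *)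

From mathcomp Require Import all_boot all_order all_algebra all_field.
From Stdlib Require Import ClassicalDescription.
Set Implicit Arguments. Unset Strict Implicit. Unset Printing Implicit Defensive.
Import GRing.Theory.
Local Open Scope ring_scope.

Definition hdist (F : eqType) (m : nat) (x y : 'rV[F]_m) : nat :=
  #|[set i : 'I_m | x 0 i != y 0 i]|.
Definition wt (F : nzRingType) (m : nat) (x : 'rV[F]_m) : nat :=
  #|[set i : 'I_m | x 0 i != 0]|.

(* Least natural number satisfying a boolean predicate (0 if none exists;
   all predicates used below are satisfiable). *)
Definition least (P : pred nat) : nat :=
  match excluded_middle_informative (exists n, P n) with
  | left h => ex_minn h
  | right _ => 0%N
  end.

Definition code_exists (F : finFieldType) (lam d m : nat) : bool :=
  [exists C : {set 'rV[F]_m}, (#|C| == lam) &&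
     [forall x in C, forall y in C, (x != y) ==> (d <= hdist x y)%N]].

Definition Nmin (F : finFieldType) (lam d : nat) : nat :=
  if d == 0%N then 0%N else least (fun m => code_exists F lam d m).

Definition is_FCC (F : finFieldType) (k : nat) (T : eqType)
    (f : 'rV[F]_k -> T) (td tf r : nat) : bool :=
  [exists p : {ffun 'rV[F]_k -> 'rV[F]_r},
    [forall u, forall v,
      ((u != v) ==> (2 * td + 1 <= hdist (row_mx u (p u)) (row_mx v (p v)))%N)
      && ((f u != f v) ==> (2 * tf + 1 <= hdist (row_mx u (p u)) (row_mx v (p v)))%N)]].

Definition r_f (F : finFieldType) (k : nat) (T : eqType)
    (f : 'rV[F]_k -> T) (td tf : nat) : nat :=
  least (fun r => is_FCC f td tf r).

(* The redundancy part is the systematic parity u P of the given code followed by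
   c_(wt u mod (2 tf + 1)), where c is a code of 2 tf + 1 words of length
   N(2 tf + 1, 2 (tf - td)) and pairwise distance 2 (tf - td).  Two messages
   of different weights either have weights congruent modulo 2 tf + 1, and
   then already differ in at least 2 tf + 1 places since
   |wt u - wt v| <= d(u, v); or they get different words of c, and the
   2 td + 1 coming from the linear code plus 2 (tf - td) from c suffice. *)
From mathcomp Require Import all_boot all_order all_algebra all_field.
From mathcomp Require Import zify.
From Stdlib Require Import ClassicalDescription.
Set Implicit Arguments. Unset Strict Implicit.
Import GRing.Theory.
Local Open Scope ring_scope.

Lemma least_min (P : pred nat) n : P n -> (least P <= n)%N.
Proof.
move=> Pn; rewrite /least; case: excluded_middle_informative => // h.
by case: ex_minnP => m _ /(_ n Pn).
Qed.

Lemma leastP (P : pred nat) : (exists n, P n) -> P (least P).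
Proof.
move=> exP; rewrite /least; case: excluded_middle_informative => // h.
by case: ex_minnP.
Qed.

Section HammingDistance.

Variable F : eqType.

Lemma hdistC m (x y : 'rV[F]_m) : hdist x y = hdist y x.
Proof. by rewrite /hdist; apply: eq_card => i; rewrite !inE eq_sym. Qed.

Lemma hdistxx m (x : 'rV[F]_m) : hdist x x = 0%N.
Proof. by rewrite /hdist; apply: eq_card0 => i; rewrite !inE eqxx. Qed.

Lemma hdist_row_mx m1 m2 (a a' : 'rV[F]_m1) (b b' : 'rV[F]_m2) :
  hdist (row_mx a b) (row_mx a' b') = (hdist a a' + hdist b b')%N.
Proof.
rewrite /hdist -!sum1dep_card big_split_ord /=.
by congr (_ + _)%N; apply: eq_bigl => i; rewrite ?row_mxEl ?row_mxEr.
Qed.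

End HammingDistance.

Lemma wt_le_hdist (F : nzRingType) m (u v : 'rV[F]_m) :
  (wt u <= wt v + hdist u v)%N.
Proof.
rewrite /wt /hdist; apply: leq_trans (leq_card_setU _ _).
apply: subset_leq_card; apply/subsetP => i; rewrite !inE.
by apply: contraR; rewrite negb_or !negbK => /andP [/eqP -> /eqP ->].
Qed.

Definition step_row (F : nzRingType) m d (i : nat) : 'rV[F]_m :=
  \row_(p < m) (if (p < i * d)%N then 1 else 0).

Lemma step_row_dist (F : nzRingType) m d i j : (i < j)%N -> (j * d <= m)%N ->
  (d <= hdist (step_row F m d i) (step_row F m d j))%N.
Proof.
move=> lt_ij le_jd_m.
have le_Si_j : (i * d + d <= j * d)%N by rewrite -mulSnr leq_mul2r lt_ij orbT.
have lt_m (t : 'I_d) : (i * d + t < m)%N by have := ltn_ord t; lia.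
pose f (t : 'I_d) : 'I_m := Ordinal (lt_m t).
have inj_f : injective f by move=> s t [/addnI /val_inj].
rewrite /hdist -[X in (X <= _)%N](card_ord d) -(card_imset (mem 'I_d) inj_f).
apply: subset_leq_card; apply/subsetP => _ /imsetP [t _ ->].
rewrite inE !mxE /=.
have lt_t := ltn_ord t.
have -> : (i * d + t < i * d)%N = false by lia.
have -> : (i * d + t < j * d)%N by lia.
by rewrite eq_sym oner_neq0.
Qed.

Lemma code_exists_step (F : finFieldType) lam d :
  (0 < d)%N -> code_exists F lam d (lam * d).
Proof.
move=> d_gt0; pose c (i : 'I_lam) := step_row F (lam * d) d i.
have dist_c (i j : 'I_lam) : i != j -> (d <= hdist (c i) (c j))%N.
  have le_lam (l : 'I_lam) : (l * d <= lam * d)%N by rewrite leq_mul2r ltnW ?orbT.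
  rewrite neq_ltn => /orP [] lt_ij; first exact: step_row_dist.
  by rewrite hdistC; apply: step_row_dist.
have inj_c : injective c.
  move=> i j eq_c; apply/eqP; apply: contraTT d_gt0 => /dist_c.
  by rewrite eq_c hdistxx leqn0 => /eqP ->.
apply/existsP; exists [set c i | i in 'I_lam].
rewrite card_imset // card_ord eqxx /=.
apply/forall_inP => _ /imsetP [i _ ->]; apply/forall_inP => _ /imsetP [j _ ->].
by apply/implyP => ne_c; apply: dist_c; apply: contraNneq ne_c => ->.
Qed.

Lemma Nmin_code (F : finFieldType) lam d :
  exists c : nat -> 'rV[F]_(Nmin F lam d), forall i j,
    (i < lam)%N -> (j < lam)%N -> i != j -> (d <= hdist (c i) (c j))%N.
Proof.
rewrite /Nmin; have [->|d_gt0] := posnP d; first by exists (fun=> 0).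
have ex_code : exists m, code_exists F lam d m.
  by exists (lam * d)%N; apply: code_exists_step.
have /existsP [C /andP [/eqP card_C dist_C]] := leastP ex_code.
have size_C : size (enum C) = lam by rewrite -cardE.
have nth_C i : (i < lam)%N -> nth 0 (enum C) i \in C.
  by move=> lt_i; rewrite -mem_enum mem_nth ?size_C.
exists (nth 0 (enum C)) => i j lt_i lt_j ne_ij.
move/forall_inP/(_ _ (nth_C i lt_i))/forall_inP/(_ _ (nth_C j lt_j)): dist_C.
by move/implyP; apply; rewrite nth_uniq ?size_C ?enum_uniq.
Qed.

Lemma eqmod_ltn_gap L a b : (a < b)%N -> a = b %[mod L] -> (L + a <= b)%N.
Proof.
move=> lt_ab eq_ab; have le_ab := ltnW lt_ab.
rewrite addnC -leq_subRL // dvdn_leq //; first by rewrite subn_gt0.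
by rewrite -eqn_mod_dvd // eq_ab.
Qed.

Lemma hdist_ge_eqmod_wt (F : nzRingType) m L (u v : 'rV[F]_m) :
  wt u != wt v -> wt u = wt v %[mod L] -> (L <= hdist u v)%N.
Proof.
rewrite neq_ltn => /orP [] lt_wt eq_wt.
  have := eqmod_ltn_gap lt_wt eq_wt; have := wt_le_hdist v u.
  by rewrite hdistC; lia.
have := eqmod_ltn_gap lt_wt (esym eq_wt); have := wt_le_hdist u v; lia.
Qed.

Theorem lemma9 (F : finFieldType) (k n td tf : nat) :
  (td <= tf)%N -> (k <= n)%N ->
  (exists P : 'M[F]_(k, n - k),
     forall u v : 'rV[F]_k, u != v ->
       (2 * td + 1 <= hdist (row_mx u (u *m P)) (row_mx v (v *m P)))%N) ->
  (r_f (fun u : 'rV[F]_k => wt u) td tf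
     <= n - k + Nmin F (2 * tf + 1) (2 * (tf - td)))%N.
Proof.
move=> le_td_tf _ [P dist_P].
set L := (2 * tf + 1)%N; set d := (2 * (tf - td))%N.
have [c dist_c] := Nmin_code F L d.
have L_gt0 : (0 < L)%N by rewrite /L addn1.
apply: least_min; apply/existsP.
exists [ffun u => row_mx (u *m P) (c (wt u %% L)%N)].
apply/forallP => u; apply/forallP => v; rewrite !ffunE !hdist_row_mx addnA.
have {}dist_P x y : x != y ->
    (2 * td + 1 <= hdist x y + hdist (x *m P) (y *m P))%N.
  by move=> /dist_P; rewrite hdist_row_mx.
apply/andP; split; apply/implyP.
  by move=> /dist_P le_dist; rewrite (leq_trans le_dist) ?leq_addr.
move=> ne_wt.
have ne_uv : u != v by apply: contraNneq ne_wt => ->.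
have [eq_res|ne_res] := eqVneq (wt u %% L)%N (wt v %% L)%N.
  by rewrite -addnA (leq_trans (hdist_ge_eqmod_wt ne_wt eq_res)) ?leq_addr.
have := leq_add (dist_P _ _ ne_uv)
  (dist_c _ _ (ltn_pmod _ L_gt0) (ltn_pmod _ L_gt0) ne_res).
by apply: leq_trans; rewrite /d /L; lia.
Qed.
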